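(* During any execution of the Iterated Relaxation Procedure (described in the context), whenever the current matroid $\mathcal M'$ is contracted by an edge $e$, the singleton $\{e\}$ is independent in $\mathcal M'$ (i.e. $e$ is not a loop of $\mathcal M'$).
   Context: Setting: a hypergraph $G=(V,E)$ with every hyperedge having at most $k$ endpoints, capacities $b_v\ge0$, demands $d_{v,e}\ge0$ for each hyperedge $e$ and endpoint $v\in e$, profits $p_e\ge0$, and a matroid $\mathcal M=(E,\mathcal I)$ given by an independence oracle. For $W\subseteq V$, $F\subseteq E$, a matroid $\mathcal M'$ on ground set $F$ with rank function $r_{\mathcal M'}$, and values $b'_v$ ($v\in W$), let $LP[W,F,\mathcal M',b']$ be $\max\{\sum_{e\in F}p_ex_e: \sum_{e\in\delta_F(v)}d_{v,e}x_e\le b'_v\ \forall v\in W,\ x(A)\le r_{\mathcal M'}(A)\ \forall A\subseteq F,\ x\ge0\}$, where $\delta_F(v)$ is the set of edges of $F$ containing $v$. For $e\in F$, $\mathcal M'-e$ is the deletion and, when $\{e\}$ is independent, $\mathcal M'/e$ is the contraction ($A$ independent in $\mathcal M'/e$ iff $A\cup\{e\}$ independent in $\mathcal M'$). Iterated Relaxation Procedure: start with $W=V$, $F=E$, $\mathcal M'=\mathcal M$, $b'_v=b_v$, $M'=\emptyset$. While $F\neq\emptyset$: compute an optimal extreme point $x^*$ of $LP[W,F,\mathcal M',b']$; if $x^*_e=0$ for some $e\in F$, set $F\leftarrow F-\{e\}$, $\mathcal M'\leftarrow\mathcal M'-e$; else if $x^*_e=1$ for some $e\in F$, set $F\leftarrow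 F-\{e\}$, $\mathcal M'\leftarrow\mathcal M'/e$, $M'\leftarrow M'\cup\{e\}$ and $b'_v\leftarrow b'_v-d_{v,e}$ for each endpoint $v$ of $e$; otherwise remove from $W$ a vertex $v\in W$ minimizing $|\delta_F(v)|-x^*(\delta_F(v))$. Return $M'$. *)

From mathcomp Require Import all_boot all_order all_algebra.
Set Implicit Arguments. Unset Strict Implicit. Unset Printing Implicit Defensive.
Import Order.TTheory GRing.Theory Num.Theory.
Local Open Scope ring_scope.

Section Defs.
Variable R : realFieldType.
Variables V E : finType.

(** A matroid on a ground set of edges is given by its independence predicate
    on subsets of [E]; a matroid "on ground set F" is one whose independent
    sets are all contained in F. *)
Definition indep_pred := {set E} -> bool.

Definition is_matroid (I : indep_pred) : Prop :=
  [/\ I set0,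
      (forall A B : {set E}, A \subset B -> I B -> I A) &
      (forall A B : {set E}, I A -> I B -> (#|A| < #|B|)%N ->
          exists2 e, e \in B :\: A & I (e |: A))].

Definition rank (I : indep_pred) (A : {set E}) : nat :=
  \max_(B : {set E} | (B \subset A) && I B) #|B|.

Definition mdelete (I : indep_pred) (e : E) : indep_pred :=
  fun A => (e \notin A) && I A.
Definition mcontract (I : indep_pred) (e : E) : indep_pred :=
  fun A => (e \notin A) && I (e |: A).

(** hypergraph data: [inc f] is the set of endpoints of hyperedge f,
    [d v f] the demand, [p f] the profit *)
Variable inc : E -> {set V}.
Variable d : V -> E -> R.
Variable p : E -> R.

Definition delta (F : {set E}) (v : V) : {set E} := [set f in F | v \in inc f].

(** Points of R^F are represented as functions E -> R vanishing outside F. *)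
Definition lp_feasible (W : {set V}) (F : {set E}) (I : indep_pred)
    (b' : V -> R) (x : E -> R) : Prop :=
  [/\ (forall f, f \notin F -> x f = 0),
      (forall f, f \in F -> 0 <= x f),
      (forall v, v \in W -> \sum_(f in delta F v) d v f * x f <= b' v) &
      (forall A : {set E}, A \subset F -> \sum_(f in A) x f <= (rank I A)%:R)].

Definition lp_obj (F : {set E}) (x : E -> R) : R := \sum_(f in F) p f * x f.

Definition lp_optimal W F I b' x : Prop :=
  lp_feasible W F I b' x /\
  forall y, lp_feasible W F I b' y -> lp_obj F y <= lp_obj F x.

Definition lp_extreme W F I b' x : Prop :=
  lp_feasible W F I b' x /\
  forall y z (t : R), lp_feasible W F I b' y -> lp_feasible W F I b' z ->
    0 < t < 1 -> (forall f, x f = t * y f + (1 - t) * z f) ->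
    forall f, y f = z f.

Definition opt_extreme W F I b' x : Prop :=
  lp_optimal W F I b' x /\ lp_extreme W F I b' x.

Record state := State {
  sW : {set V};
  sF : {set E};
  sI : indep_pred;
  sb : V -> R;
  sM : {set E}
}.

Definition init_state (I : indep_pred) (b : V -> R) : state :=
  State setT setT I b set0.

Definition contract_step (s : state) (e : E) (s' : state) : Prop :=
  exists x, [/\ sF s != set0 /\ opt_extreme (sW s) (sF s) (sI s) (sb s) x,
    (forall f, f \in sF s -> x f != 0), e \in sF s, x e = 1 &
    s' = State (sW s) (sF s :\ e) (mcontract (sI s) e)
               (fun v => if v \in inc e then sb s v - d v e else sb s v)
               (e |: sM s)].

Definition delete_step (s : state) (e : E) (s' : state) : Prop :=
  exists x, [/\ sF s != set0 /\ opt_extreme (sW s) (sF s) (sI s) (sb s) x,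
    e \in sF s, x e = 0 &
    s' = State (sW s) (sF s :\ e) (mdelete (sI s) e) (sb s) (sM s)].

Definition relax_step (s : state) (v : V) (s' : state) : Prop :=
  exists x, [/\ sF s != set0 /\ opt_extreme (sW s) (sF s) (sI s) (sb s) x,
    (forall f, f \in sF s -> (x f != 0) && (x f != 1)),
    v \in sW s,
    (forall u, u \in sW s ->
       (#|delta (sF s) v|%:R - \sum_(f in delta (sF s) v) x f
        <= #|delta (sF s) u|%:R - \sum_(f in delta (sF s) u) x f)) &
    s' = State (sW s :\ v) (sF s) (sI s) (sb s) (sM s)].

Definition step (s s' : state) : Prop :=
  (exists e, delete_step s e s') \/ (exists e, contract_step s e s') \/
  (exists v, relax_step s v s').

Inductive reachable (s0 : state) : state -> Prop :=
| reach_refl : reachable s0 s0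
| reach_step s s' : reachable s0 s -> step s s' -> reachable s0 s'.

End Defs.

From mathcomp Require Import all_boot all_order all_algebra.
Set Implicit Arguments. Unset Strict Implicit. Unset Printing Implicit Defensive.
Import Order.TTheory GRing.Theory Num.Theory.
Local Open Scope ring_scope.

(* The rank constraint of the LP for the singleton A = {e} reads
   x_e <= r({e}), and r({e}) = 0 when e is a loop; an edge contracted by the
   procedure has x*_e = 1, so it cannot be a loop. *)

Lemma rank_set1_loop (E : finType) (I : indep_pred E) (e : E) :
  ~~ I [set e] -> rank I [set e] = 0%N.
Proof.
move=> loop_e; apply/eqP; rewrite -leqn0; apply/bigmax_leqP => B /andP[].
rewrite subset1 => /orP[/eqP -> | /eqP ->]; last by rewrite cards0.
by rewrite (negbTE loop_e).
Qed.

Section FeasibleSupport.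
Variables (R : realFieldType) (V E : finType).
Variables (inc : E -> {set V}) (d : V -> E -> R).
Variables (W : {set V}) (F : {set E}) (I : indep_pred E) (b' : V -> R).

Lemma lp_feasible_le_rank_set1 (x : E -> R) (e : E) :
  lp_feasible inc d W F I b' x -> e \in F -> x e <= (rank I [set e])%:R.
Proof.
case=> _ _ _ rank_le Fe.
by have := rank_le [set e]; rewrite sub1set Fe big_set1; apply.
Qed.

Lemma lp_feasible_support_indep (x : E -> R) (e : E) :
  lp_feasible inc d W F I b' x -> e \in F -> 0 < x e -> I [set e].
Proof.
move=> feas_x Fe x_e_gt0; apply/negPn/negP => loop_e.
have := lp_feasible_le_rank_set1 feas_x Fe.
by rewrite rank_set1_loop // leNgt x_e_gt0.
Qed.

End FeasibleSupport.

Lemma contract_step_indep (R : realFieldType) (V E : finType)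
    (inc : E -> {set V}) (d : V -> E -> R) (p : E -> R)
    (s s' : state R V E) (e : E) :
  contract_step inc d p s e s' -> sI s [set e].
Proof.
case=> x [[_ [[feas_x _] _]] _ Fe x_e1 _].
by apply: (lp_feasible_support_indep feas_x Fe); rewrite x_e1 ltr01.
Qed.

Theorem lemma1 (R : realFieldType) (V E : finType) (k : nat)
    (inc : E -> {set V}) (b : V -> R) (d : V -> E -> R) (p : E -> R)
    (I : indep_pred E)
    (Hk : forall f : E, (#|inc f| <= k)%N)
    (Hb : forall v, 0 <= b v)
    (Hd : forall v f, v \in inc f -> 0 <= d v f)
    (Hp : forall f, 0 <= p f)
    (HI : is_matroid I)
    (s : state R V E) (e : E) (s' : state R V E) :
  reachable inc d p (init_state I b) s ->
  contract_step inc d p s e s' ->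
  sI s [set e].
Proof. by move=> _; apply: contract_step_indep. Qed.
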